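(* Let $P(X_1,\ldots,X_n)$ be a polynomial over $\mathbb{C}$ which is symmetric in $X_1,\ldots,X_n$. Then $$P(E_{k_1},\ldots,E_{k_n})\prod_{1\le i<j\le n}\frac{k_j-k_i}{j-i}=P(1,\ldots,1)\cdot\prod_{1\le i<j\le n}\frac{k_j-k_i}{j-i}.$$
   Context: $E_{k_j}$ denotes the shift operator in the variable $k_j$ acting on $\mathbb{C}[k_1,\ldots,k_n]$, $E_{k_j}F(\ldots,k_j,\ldots)=F(\ldots,k_j+1,\ldots)$; since these commute, $P(E_{k_1},\ldots,E_{k_n})$ is a well-defined operator (products are compositions, and $1$ corresponds to the identity). *)

From HB Require Import structures.
From mathcomp Require Import all_boot all_algebra.
From mathcomp Require Import mpoly.
From mathcomp Require Import complex.
From mathcomp Require Import Rstruct.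
Set Implicit Arguments. Unset Strict Implicit. Unset Printing Implicit Defensive.
Import GRing.Theory.
Local Open Scope ring_scope.

Definition CC : numClosedFieldType := complex Rdefinitions.R.

(* Shift by a multi-exponent m : F(k_1,...,k_n) |-> F(k_1+m_1,...,k_n+m_n),
   i.e. the operator E_{k_1}^{m_1} ... E_{k_n}^{m_n}. *)
Definition shift_mpoly (n : nat) (m : 'X_{1..n}) (F : {mpoly CC[n]}) : {mpoly CC[n]} :=
  F \mPo [tuple 'X_i + ((m i)%:R)%:MP | i < n].

(* P(E_{k_1},...,E_{k_n}) applied to F : for P = sum_m c_m X^m,
   P(E) F = sum_m c_m E^m F. *)
Definition shift_op (n : nat) (P F : {mpoly CC[n]}) : {mpoly CC[n]} :=
  \sum_(m <- msupp P) P@_m *: shift_mpoly m F.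

(* prod_{1 <= i < j <= n} (k_j - k_i)/(j - i), indices shifted to 0..n-1. *)
Definition vdm_normalized (n : nat) : {mpoly CC[n]} :=
  \prod_(i < n) \prod_(j < n | (i < j)%N)
     (('X_j - 'X_i) * ((((j - i)%N)%:R : CC)^-1)%:MP).

From HB Require Import structures.
From mathcomp Require Import all_boot all_algebra.
From mathcomp Require Import fingroup perm mpoly.
Set Implicit Arguments. Unset Strict Implicit. Unset Printing Implicit Defensive.
Import GRing.Theory Num.Theory.
Local Open Scope ring_scope.

(* Up to a constant, the normalized product is the Vandermonde determinant
   det (k_i ^ j).  Expanding each row binomially, E^m det (k_i ^ j) is the
   sum, over all maps f : [n] -> [n], of k^f times
   H_f(m) = det (binom(j, f i) m_i ^ (j - f i)).
   For symmetric P the total weight sum_m P_m H_f(m) of k^f is alternating in f,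
   and so is P(1,...,1) H_f(0); two alternating functions of f agreeing at the
   identity agree everywhere, so P(E) det (k_i ^ j) = P(1,...,1) det (k_i ^ j). *)

Lemma exprDn_ord (R : comPzSemiRingType) (n : nat) (x y : R) (j : 'I_n) :
  (x + y) ^+ j = \sum_(l < n) x ^+ l * ('C(j, l)%:R * y ^+ (j - l)).
Proof.
rewrite addrC exprDn.
rewrite (big_ord_widen n (fun l : nat => y ^+ (j - l) * x ^+ l *+ 'C(j, l)))
  ?ltn_ord // big_mkcond /=.
apply: eq_bigr => l _; case: ifP => [_ | /negbT].
  by rewrite -mulr_natl mulrA mulrC.
by rewrite -leqNgt => /bin_small ->; rewrite mulr0n mul0r mulr0.
Qed.

Lemma det_sum_rows (R : comPzRingType) (n : nat) (a : 'I_n -> 'I_n -> R)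
    (b : 'I_n -> 'I_n -> 'I_n -> R) :
  \det (\matrix_(i, j) \sum_(l < n) a i l * b i l j) =
  \sum_(f : {ffun 'I_n -> 'I_n})
    (\prod_i a i (f i)) * \det (\matrix_(i, j) b i (f i) j).
Proof.
rewrite /determinant.
under eq_bigr => s _ do under eq_bigr => i _ do rewrite mxE.
under eq_bigr => s _ do rewrite bigA_distr_bigA big_distrr /=.
rewrite exchange_big /=; apply: eq_bigr => f _.
rewrite big_distrr /=; apply: eq_bigr => s _.
rewrite mulrCA; congr (_ * _).
by rewrite -big_split /=; apply: eq_bigr => i _; rewrite mxE.
Qed.

Section ShiftedMinor.
Variables (R : comPzRingType) (n : nat).
Implicit Types (f : {ffun 'I_n -> 'I_n}) (c : 'I_n -> R).

Definition shifted_minor f c : R :=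
  \det (\matrix_(i, j) ('C(j, f i)%:R * c i ^+ (j - f i))).

Lemma eq_shifted_minor f c1 c2 :
  c1 =1 c2 -> shifted_minor f c1 = shifted_minor f c2.
Proof. by move=> eq_c; congr (\det _); apply/matrixP => i j; rewrite !mxE eq_c. Qed.

Lemma shifted_minor_perm f c (s : 'S_n) :
  shifted_minor [ffun i => f (s i)] (c \o s) = (-1) ^+ s * shifted_minor f c.
Proof.
rewrite /shifted_minor -det_perm -det_mulmx -row_permE.
by congr (\det _); apply/matrixP => i j; rewrite !mxE ffunE.
Qed.

Lemma shifted_minor_id c : shifted_minor [ffun i => i] c = 1.
Proof.
rewrite /shifted_minor -det_tr det_trig.
  by apply: big1 => i _; rewrite !mxE ffunE binn subnn mulr1.
by apply/is_trig_mxP => i j lt_ij; rewrite !mxE ffunE bin_small ?mul0r.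
Qed.

Lemma det_shifted_powers (x c : 'I_n -> R) :
  \det (\matrix_(i, j) (x i + c i) ^+ j) =
  \sum_(f : {ffun 'I_n -> 'I_n}) (\prod_i x i ^+ f i) * shifted_minor f c.
Proof.
have -> : \matrix_(i, j) (x i + c i) ^+ j =
    \matrix_(i, j) \sum_(l < n) x i ^+ l * ('C(j, l)%:R * c i ^+ (j - l)) :> 'M_n.
  by apply/matrixP => i j; rewrite !mxE exprDn_ord.
exact: det_sum_rows.
Qed.

End ShiftedMinor.

Lemma rmorph_shifted_minor (R S : comPzRingType) (phi : {rmorphism R -> S})
    (n : nat) (f : {ffun 'I_n -> 'I_n}) (c : 'I_n -> R) :
  phi (shifted_minor f c) = shifted_minor f (fun i => phi (c i)).
Proof.
rewrite -det_map_mx; congr (\det _).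
by apply/matrixP => i j; rewrite !mxE rmorphM rmorph_nat rmorphXn.
Qed.

Definition alternating (R : pzRingType) (n : nat) (A : {ffun 'I_n -> 'I_n} -> R) :=
  forall (f : {ffun 'I_n -> 'I_n}) (s : 'S_n), A [ffun i => f (s i)] = (-1) ^+ s * A f.

Section Alternating.
Variables (R : numDomainType) (n : nat).
Implicit Types (f : {ffun 'I_n -> 'I_n}) (A B : {ffun 'I_n -> 'I_n} -> R).

Lemma alternating_ninj A f : alternating A -> ~~ injectiveb f -> A f = 0.
Proof.
move=> altA /injectivePn[x [y neq_xy eq_fxy]].
have f_tperm : [ffun i => f (tperm x y i)] = f.
  by apply/ffunP => i; rewrite ffunE; case: tpermP => // ->.
have := altA f (tperm x y); rewrite f_tperm odd_tperm neq_xy expr1 mulN1r.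
move=> /(congr1 (fun z => z + A f)); rewrite addNr -mulr2n => /eqP.
by rewrite mulrn_eq0 => /eqP.
Qed.

Lemma alternating_eq A B : alternating A -> alternating B ->
  A [ffun i => i] = B [ffun i => i] -> A =1 B.
Proof.
move=> altA altB eq_id f; have [/injectiveP inj_f | ninj_f] := boolP (injectiveb f).
  have -> : f = [ffun i => [ffun k => k] (perm inj_f i)].
    by apply/ffunP => i; rewrite !ffunE permE.
  by rewrite altA altB eq_id.
by rewrite !alternating_ninj.
Qed.

End Alternating.

Section WeightedMinor.
Variables (R : comNzRingType) (n : nat) (P : {mpoly R[n]}).
Hypothesis symP : P \is symmetric.

Definition weighted_minor (f : {ffun 'I_n -> 'I_n}) : R :=
  \sum_(m <- msupp P) P@_m * shifted_minor f (fun i => (m i)%:R).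

Lemma sum_msupp_mperm (s : 'S_n) (F : 'X_{1..n} -> R) :
  \sum_(m <- msupp P) P@_m * F m =
  \sum_(m <- msupp P) P@_m * F [multinom m (s i) | i < n].
Proof.
have perm_supp :
    perm_eq (msupp P) [seq [multinom m (s i) | i < n] | m : 'X_{1..n} <- msupp P].
  apply: uniq_perm; first exact: msupp_uniq.
    by rewrite map_inj_uniq ?msupp_uniq //; exact: mperm_inj.
  move=> m; apply/idP/mapP => [supp_m | [m' supp_m' ->]]; last first.
    by rewrite issym_msupp.
  by exists [multinom m ((s^-1)%g i) | i < n]; rewrite ?issym_msupp ?(mpermK s m).
by rewrite (perm_big _ perm_supp) big_map; apply: eq_bigr => m _; rewrite msym_coeff.
Qed.

Lemma weighted_minor_alternating : alternating weighted_minor.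
Proof.
move=> f s; rewrite /weighted_minor (sum_msupp_mperm s) big_distrr /=.
apply: eq_bigr => m _; rewrite mulrCA -shifted_minor_perm.
by congr (_ * _); apply: eq_shifted_minor => i /=; rewrite mnmE.
Qed.

Lemma weighted_minor_id : weighted_minor [ffun i => i] = P.@[fun _ => 1].
Proof.
rewrite mevalE; apply: eq_bigr => m _.
by rewrite shifted_minor_id big1 // => i _; rewrite expr1n.
Qed.

End WeightedMinor.

Lemma weighted_minorE (R : numDomainType) (n : nat) (P : {mpoly R[n]})
    (f : {ffun 'I_n -> 'I_n}) :
  P \is symmetric ->
  weighted_minor P f = P.@[fun _ => 1] * shifted_minor f (fun _ => 0).
Proof.
move=> symP.
pose B (g : {ffun 'I_n -> 'I_n}) := P.@[fun _ => 1] * shifted_minor g (fun _ => 0).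
apply: (@alternating_eq _ _ _ B); first exact: weighted_minor_alternating.
  by move=> g s; rewrite /B mulrCA -(shifted_minor_perm g (fun _ => 0)).
by rewrite weighted_minor_id /B shifted_minor_id mulr1.
Qed.

Section Vandermonde.
Variable n : nat.
Local Notation MP := {mpoly CC[n]}.

Definition vdm_mx : 'M[MP]_n := \matrix_(i, j) 'X_i ^+ j.

Definition vdm_scale : CC :=
  \prod_(i < n) \prod_(j < n | (i < j)%N) (((j - i)%N)%:R : CC)^-1.

Lemma vdm_normalizedE : vdm_normalized n = \det vdm_mx * vdm_scale%:MP.
Proof.
have -> : \det vdm_mx = \det (Vandermonde n (\row_j ('X_j : MP))).
  by rewrite -det_tr; congr (\det _); apply/matrixP => i j; rewrite !mxE.
rewrite det_Vandermonde rmorph_prod -big_split /=; apply: eq_bigr => i _.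
by rewrite rmorph_prod -big_split /=; apply: eq_bigr => j _; rewrite !mxE.
Qed.

Lemma det_vdm_mx_shift (c : 'I_n -> CC) :
  \det (\matrix_(i, j) ('X_i + (c i)%:MP) ^+ j : 'M[MP]_n) =
  \sum_(f : {ffun 'I_n -> 'I_n}) (\prod_i 'X_i ^+ f i) * (shifted_minor f c)%:MP.
Proof.
by rewrite det_shifted_powers; apply: eq_bigr => f _; rewrite rmorph_shifted_minor.
Qed.

Lemma det_vdm_mx :
  \det vdm_mx =
  \sum_(f : {ffun 'I_n -> 'I_n})
    (\prod_i 'X_i ^+ f i) * (shifted_minor f (fun _ => 0))%:MP.
Proof.
rewrite -det_vdm_mx_shift; congr (\det _).
by apply/matrixP => i j; rewrite !mxE addr0.
Qed.

Lemma shift_det_vdm_mx (m : 'X_{1..n}) :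
  shift_mpoly m (\det vdm_mx) =
  \sum_(f : {ffun 'I_n -> 'I_n})
    (\prod_i 'X_i ^+ f i) * (shifted_minor f (fun i => (m i)%:R))%:MP.
Proof.
rewrite -det_vdm_mx_shift /shift_mpoly -det_map_mx; congr (\det _).
by apply/matrixP => i j; rewrite !mxE rmorphXn /= comp_mpolyXU -tnth_nth tnth_mktuple.
Qed.

Lemma shift_mpolyMC (m : 'X_{1..n}) (F : MP) (k : CC) :
  shift_mpoly m (F * k%:MP) = shift_mpoly m F * k%:MP.
Proof. by rewrite /shift_mpoly rmorphM /= comp_mpolyC. Qed.

End Vandermonde.

Theorem lemma5 (n : nat) (P : {mpoly CC[n]}) :
  P \is symmetric ->
  shift_op P (vdm_normalized n) = P.@[fun _ => 1] *: vdm_normalized n.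
Proof.
move=> symP; rewrite vdm_normalizedE /shift_op.
under eq_bigr => m _ do rewrite shift_mpolyMC shift_det_vdm_mx scalerAl.
rewrite -mulr_suml scalerAl; congr (_ * _).
rewrite det_vdm_mx scaler_sumr.
under eq_bigr => m _ do rewrite scaler_sumr.
rewrite exchange_big /=; apply: eq_bigr => f _.
rewrite scalerAr -mul_mpolyC -rmorphM -weighted_minorE // rmorph_sum mulr_sumr.
by apply: eq_bigr => m _; rewrite rmorphM mul_mpolyC scalerAr.
Qed.
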